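(* Let $I=(N,A,V)$ be an instance with three agents $N=\{1,2,3\}$, binary valuations ($V_i(j,a)\in\{0,1\}$) satisfying the no-chore assumption ($V_i(i,a)\ge V_i(j,a)$ for all $i,j,a$). Let $\pi$ be an EF1 complete allocation of $I$ such that for every pair $i,j\in N$, if $\Delta_{ij}(\pi)=-1$ then $\Delta_{ji}(\pi)\ge 0$. Let $a\notin A$ be a new item (with binary, no-chore values $V_i(j,a)$) for which there is an agent $i\in N$ with $\Delta_{ij}(a)=0$ for all $j\in N$. Then the instance $I'=(N,A\cup\{a\},V)$ admits an EF1 complete allocation.
   Context: An allocation $\pi=(\pi_1,\pi_2,\pi_3)$ consists of pairwise disjoint bundles (complete if they cover the item set); $\pi(a)$ is the agent receiving $a$; $V_i(j,a)$ is agent $i$'s value when item $a$ goes to $j$; $V_i(\pi)=\sum_{a\text{ assigned in }\pi}V_i(\pi(a),a)$; $\pi^{i\leftrightarrow j}$ swaps bundles of $i$ and $j$. A complete allocation $\pi$ is EF1 if for all $i,j$ there exist $C$ with $|C|\le1$ and the allocation $\lambda$ with $\lambda_\ell=\pi_\ell\setminus C$ for all $\ell$ such that $V_i(\lambda)\ge V_i(\lambda^{i\leftrightarrow j})$. $\Delta_{ij}(a)=V_i(i,a)-V_i(j,a)$, $\Delta_{ij}(S)=\sum_{a\in S}\Delta_{ij}(a)$ for a set $S$, and $\Delta_{ij}(\pi)=\Delta_{ij}(\pi_i)-\Delta_{ij}(\pi_j)$. *)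

From mathcomp Require Import all_boot all_order all_algebra.
Set Implicit Arguments. Unset Strict Implicit. Unset Printing Implicit Defensive.
Import Order.TTheory GRing.Theory Num.Theory.

(* Items form a finite type T; an instance has
   item set S : {set T}.  A valuation V i j x is agent i's value when item x
   goes to agent j.  A complete allocation of S is an assignment pi : T -> 'I_3
   (only its values on S matter); bundle pi_l = [set x in S | pi x == l]. *)

Definition valuation (T : finType) := 'I_3 -> 'I_3 -> T -> nat.

Definition Vval (T : finType) (V : valuation T) (i : 'I_3) (S : {set T})
  (pi : T -> 'I_3) : nat := \sum_(x in S) V i (pi x) x.

Definition swapag (i j l : 'I_3) : 'I_3 :=
  if l == i then j else if l == j then i else l.

Definition swap_alloc (T : finType) (pi : T -> 'I_3) (i j : 'I_3) : T -> 'I_3 :=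
  fun x => swapag i j (pi x).

Definition EF1 (T : finType) (V : valuation T) (S : {set T}) (pi : T -> 'I_3) :=
  forall i j : 'I_3, exists C : {set T},
    (#|C| <= 1)%N /\
    (Vval V i (S :\: C) (swap_alloc pi i j) <= Vval V i (S :\: C) pi)%N.

Definition Delta_item (T : finType) (V : valuation T) (i j : 'I_3) (x : T) : int :=
  (V i i x)%:Z - (V i j x)%:Z.

Definition Delta_set (T : finType) (V : valuation T) (i j : 'I_3) (B : {set T}) : int :=
  \sum_(x in B) Delta_item V i j x.

Definition bundle (T : finType) (S : {set T}) (pi : T -> 'I_3) (l : 'I_3) : {set T} :=
  [set x in S | pi x == l].

Definition Delta_alloc (T : finType) (V : valuation T) (S : {set T})
  (pi : T -> 'I_3) (i j : 'I_3) : int :=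
  Delta_set V i j (bundle S pi i) - Delta_set V i j (bundle S pi j).

From mathcomp Require Import all_boot all_order all_algebra.
From mathcomp Require Import zify.
Import Order.TTheory GRing.Theory Num.Theory.
Local Open Scope ring_scope.
Set Implicit Arguments.

(* With binary valuations, EF1 between agents i and j says exactly that
   Delta_ij(pi) >= -1.  Giving the new item a to agent k can only lower
   Delta_ik, by Delta_ik(a) <= 1, so k is a bad recipient only if some i
   blocks it: Delta_ik(pi) = -1 and Delta_ik(a) = 1.  Let i0 be indifferent
   to a.  If i0 is blocked by j, j by k and k by l, then the indifference of
   i0 gives k, l <> i0, hence l = j, and Delta_kj(pi) = Delta_jk(pi) = -1,
   which the hypothesis on pi rules out. *)

Section SwapMargin.
Variables (T : finType) (V : valuation T).

Definition swap_margin_item (pi : T -> 'I_3) (i j : 'I_3) (x : T) : int :=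
  (V i (pi x) x)%:Z - (V i (swap_alloc pi i j x) x)%:Z.

Definition swap_margin (S : {set T}) (pi : T -> 'I_3) (i j : 'I_3) : int :=
  \sum_(x in S) swap_margin_item pi i j x.

Lemma Vval_swap_leE (S : {set T}) pi i j :
  (Vval V i S (swap_alloc pi i j) <= Vval V i S pi)%N = (0 <= swap_margin S pi i j).
Proof.
rewrite /swap_margin /swap_margin_item sumrB subr_ge0 -lez_nat /Vval.
by rewrite -!natz !natr_sum; congr (_ <= _); apply: eq_bigr => x _; rewrite natz.
Qed.

Lemma Delta_set_bundle (S : {set T}) pi i j l :
  Delta_set V i j (bundle S pi l) =
  \sum_(x in S) (if pi x == l then Delta_item V i j x else 0).
Proof.
rewrite /Delta_set /bundle big_mkcond [RHS]big_mkcond.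
by apply: eq_bigr => x _; rewrite inE; case: (x \in S).
Qed.

Lemma swap_margin_Delta (S : {set T}) pi (i j : 'I_3) :
  i != j -> swap_margin S pi i j = Delta_alloc V S pi i j.
Proof.
move=> nij; rewrite /Delta_alloc !Delta_set_bundle -sumrB.
apply: eq_bigr => x _; rewrite /swap_margin_item /swap_alloc /swapag /Delta_item.
case: eqP => [->|nxi]; first by rewrite (negbTE nij); lia.
by case: eqP => [->|nxj]; lia.
Qed.

Lemma swap_alloc_id (pi : T -> 'I_3) i : swap_alloc pi i i =1 pi.
Proof. by move=> x; rewrite /swap_alloc /swapag; case: eqP. Qed.

Section Binary.
Variable S : {set T}.
Hypothesis binary : forall i j x, x \in S -> (V i j x <= 1)%N.

Lemma EF1_pairP pi i j :
  (exists C : {set T}, (#|C| <= 1)%N /\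
     (Vval V i (S :\: C) (swap_alloc pi i j) <= Vval V i (S :\: C) pi)%N)
  <-> -1 <= swap_margin S pi i j.
Proof.
have item_ge : forall x, x \in S -> -1 <= swap_margin_item pi i j x.
  by move=> x xS; have := binary i (swap_alloc pi i j x) xS; rewrite /swap_margin_item; lia.
split=> [[C [C_le1]]|margin_ge].
  rewrite Vval_swap_leE => rest_ge0; rewrite /swap_margin (big_setID C) /=.
  have SC_le1 : (#|S :&: C| <= 1)%N by apply: leq_trans C_le1; exact/subset_leq_card/subsetIr.
  have : - (#|S :&: C|%:R) <= \sum_(x in S :&: C) swap_margin_item pi i j x.
    rewrite -sumr_const -sumrN; apply: ler_sum => x /setIP[xS _]; exact: item_ge.
  move: rest_ge0 SC_le1; rewrite natz /swap_margin.
  by move: (\sum_(x in S :\: C) _) (\sum_(x in S :&: C) _) => *; lia.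
have [margin_ge0|margin_lt0] := leP 0 (swap_margin S pi i j).
  by exists set0; rewrite cards0 setD0 Vval_swap_leE.
have [x xS x_lt0] : exists2 x, x \in S & swap_margin_item pi i j x < 0.
  apply/exists_inP; apply: contraTT margin_lt0 => /exists_inPn all_ge0.
  by rewrite -leNgt sumr_ge0 // => x /all_ge0; rewrite -leNgt.
exists [set x]; rewrite cards1 Vval_swap_leE; split=> //.
move: margin_ge x_lt0; rewrite /swap_margin (big_setD1 x xS) /=.
by move: (\sum_(y in S :\ x) _) => *; lia.
Qed.

Lemma EF1_DeltaP pi :
  EF1 V S pi <-> forall i j : 'I_3, i != j -> -1 <= Delta_alloc V S pi i j.
Proof.
split=> [ef1 i j nij | Delta_ge i j].
  by rewrite -swap_margin_Delta //; apply/EF1_pairP.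
apply/EF1_pairP; have [<-|nij] := eqVneq i j; last by rewrite swap_margin_Delta // Delta_ge.
rewrite /swap_margin big1 // => x _.
by rewrite /swap_margin_item swap_alloc_id subrr.
Qed.

End Binary.

Definition give (pi : T -> 'I_3) (a : T) (k : 'I_3) : T -> 'I_3 :=
  fun x => if x == a then k else pi x.

Lemma Delta_alloc_give (A : {set T}) a pi k (i j : 'I_3) :
  a \notin A -> i != j ->
  Delta_alloc V (a |: A) (give pi a k) i j =
  Delta_alloc V A pi i j +
  (if k == i then Delta_item V i j a
   else if k == j then - Delta_item V i j a else 0).
Proof.
move=> aA nij; rewrite -!swap_margin_Delta // /swap_margin big_setU1 //= addrC.
congr (_ + _).
  apply: eq_bigr => x xA; rewrite /swap_margin_item /swap_alloc /give.
  by case: eqP xA aA => [->->|].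
rewrite /swap_margin_item /swap_alloc /give eqxx /swapag /Delta_item.
case: eqP => [->|_]; first by [].
by case: eqP => [->|_]; lia.
Qed.

End SwapMargin.
Arguments give {T}.

Lemma I3_third (x y z w : 'I_3) :
  x != y -> y != z -> x != z -> w != x -> w != z -> w = y.
Proof.
case: x y z w => [x hx] [y hy] [z hz] [w hw].
rewrite -!val_eqE /= => *; apply: val_inj => /=; lia.
Qed.

Section NewItem.
Variables (T : finType) (V : valuation T) (A : {set T}) (a : T) (pi : T -> 'I_3).
Hypothesis a_notin_A : a \notin A.
Hypothesis binary : forall i j x, x \in a |: A -> (V i j x <= 1)%N.
Hypothesis no_chore : forall i j x, x \in a |: A -> (V i j x <= V i i x)%N.
Hypothesis pi_EF1 : EF1 V A pi.

Lemma EF1_give_or_blocked k :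
  EF1 V (a |: A) (give pi a k) \/
  exists2 i, i != k & Delta_alloc V A pi i k = -1 /\ Delta_item V i k a = 1.
Proof.
have a_in : a \in a |: A := setU11 a A.
have binary_A i j x : x \in A -> (V i j x <= 1)%N.
  by move=> xA; apply: binary; rewrite setU1r.
have [/existsP[i /andP[nik /andP[/eqP Dik /eqP dik]]]|] :=
  boolP [exists i, (i != k) && ((Delta_alloc V A pi i k == -1) && (Delta_item V i k a == 1))].
  by right; exists i.
rewrite negb_exists => /forallP not_blocked; left.
apply/(EF1_DeltaP _ binary) => i j nij; rewrite Delta_alloc_give //.
have := (EF1_DeltaP _ binary_A pi).1 pi_EF1 i j nij.
have := no_chore i j a_in; have := binary i i a_in; rewrite /Delta_item.
have [<-|nki] := eqVneq k i; first by lia.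
have [<-|nkj] := eqVneq k j; last by rewrite addr0.
have [D_eq|D_neq] := eqVneq (Delta_alloc V A pi i k) (-1); last by lia.
by move: (not_blocked i); rewrite [i == k]eq_sym nki D_eq eqxx /Delta_item => /eqP; lia.
Qed.

End NewItem.

Theorem lemma6 (T : finType) (V : 'I_3 -> 'I_3 -> T -> nat)
  (A : {set T}) (a : T) (pi : T -> 'I_3) :
  a \notin A ->
  (* binary valuations on A ∪ {a} *)
  (forall i j x, x \in a |: A -> (V i j x <= 1)%N) ->
  (* no-chore assumption on A ∪ {a} *)
  (forall i j x, x \in a |: A -> (V i j x <= V i i x)%N) ->
  (* pi is an EF1 complete allocation of I = (N, A, V) *)
  EF1 V A pi ->
  (forall i j : 'I_3, Delta_alloc V A pi i j = (-1)%R ->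
     (0 <= Delta_alloc V A pi j i)%R) ->
  (exists i : 'I_3, forall j : 'I_3, Delta_item V i j a = 0%R) ->
  exists pi' : T -> 'I_3, EF1 V (a |: A) pi'.
Proof.
move=> aA bin noch ef1 not_mutual [i0 indiff].
have give_or_blocked := EF1_give_or_blocked aA bin noch ef1.
case: (give_or_blocked i0) => [?|[j _ [_ dj]]]; first by eexists.
case: (give_or_blocked j) => [?|[k nkj [Dkj dk]]]; first by eexists.
case: (give_or_blocked k) => [?|[l nlk [Dlk dl]]]; first by eexists.
have nk_i0 : k != i0 by apply: contra_eq_neq dk => ->; rewrite indiff.
have nl_i0 : l != i0 by apply: contra_eq_neq dl => ->; rewrite indiff.
have nj_i0 : j != i0 by apply: contra_eq_neq dj => ->; rewrite indiff.
have elj : l = j by apply: (@I3_third i0 j k l); rewrite // eq_sym.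
by have := not_mutual k j Dkj; rewrite -elj Dlk.
Qed.
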